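(* There is no impartial deterministic selection mechanism that always selects a winner and is $\alpha$-additive for some $\alpha\le 2$; i.e., for every such mechanism $f$ (defined on all $\mathcal{G}_n$) there exist $n$ and $\mathbf{x}\in\mathcal{G}_n$ with $\Delta(\mathbf{x})-\delta(f(\mathbf{x}),\mathbf{x})>2$.
   Context: $\mathcal{G}_n$ is the set of all directed graphs (nomination profiles) on $N=\{1,\dots,n\}$ with no self-loops; each vertex may nominate any set of other vertices, including none. For a profile $\mathbf{x}$, $x_u$ is the set of outgoing edges of $u$ and $(x'_u,\mathbf{x}_{-u})$ is the profile with $u$'s outgoing edges replaced by $x'_u$. $\delta(u,\mathbf{x})$ is the in-degree of $u$ and $\Delta(\mathbf{x})=\max_u\delta(u,\mathbf{x})$. A deterministic selection mechanism maps each profile to a single winner vertex $f(\mathbf{x})$. It is impartial if for every $\mathbf{x}$, $u$ and $x'_u$, $u$ is the winner under $\mathbf{x}$ iff $u$ is the winner under $(x'_u,\mathbf{x}_{-u})$. It is $\alpha$-additive if $\max_{\mathbf{x}\in\mathcal{G}_n}\{\Delta(\mathbf{x})-\delta(f(\mathbf{x}),\mathbf{x})\}\le\alpha$ for every $n$. *)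

From mathcomp Require Import all_boot.
Set Implicit Arguments. Unset Strict Implicit. Unset Printing Implicit Defensive.

(* A nomination profile on vertex set 'I_n: x u is the set of vertices u nominates. *)
Definition profile (n : nat) := {ffun 'I_n -> {set 'I_n}}.

Definition loopless n (x : profile n) : Prop := forall u : 'I_n, u \notin x u.

Definition update n (x : profile n) (u : 'I_n) (xu : {set 'I_n}) : profile n :=
  [ffun v => if v == u then xu else x v].

Definition indeg n (u : 'I_n) (x : profile n) : nat := #|[set v | u \in x v]|.

Definition maxdeg n (x : profile n) : nat := \max_(v : 'I_n) indeg v x.

(* A deterministic selection mechanism: for every n >= 1 (vertex set 'I_n.+1,
   so there is always a vertex to select) maps each profile to a winner. *)
Definition mechanism := forall n : nat, profile n.+1 -> 'I_n.+1.

Definition impartial (f : mechanism) : Prop :=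
  forall (n : nat) (x : profile n.+1) (u : 'I_n.+1) (xu : {set 'I_n.+1}),
    loopless x -> u \notin xu ->
    (f n x == u) = (f n (update x u xu) == u).

From mathcomp Require Import all_boot.

Set Implicit Arguments. Unset Strict Implicit. Unset Printing Implicit Defensive.

(* Impartiality links any two profiles that differ only in the outgoing edges
   of a single vertex u: u wins in one iff it wins in the other.  A 2-additive
   mechanism must moreover pick, in every profile, a vertex whose in-degree is
   within 2 of the maximum.  The 49 loopless profiles on 4 vertices below,
   chained by single-row changes, admit no choice of winners meeting both
   requirements; this is checked by an exhaustive backtracking search whose
   completeness is proved once and for all. *)

Section Backtracking.

Variables (T D : eqType) (dom : seq D).
Variable admissible : T -> D -> bool.
Variable compatible : T -> D -> T -> D -> bool.

(* Written with [if] rather than [has]/[&&] so that call-by-value evaluation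
   prunes a branch as soon as it fails. *)
Fixpoint extendable (ts : seq T) (partial : seq (T * D)) : bool :=
  if ts is t :: ts' then
    let fix extend_with ds :=
      if ds is d :: ds' then
        if (if admissible t d && all (fun p => compatible p.1 p.2 t d) partial
            then extendable ts' ((t, d) :: partial) else false)
        then true else extend_with ds'
      else false in
    extend_with dom
  else true.

Lemma extendable_cons t ts partial :
  extendable (t :: ts) partial =
  has (fun d => [&& admissible t d,
                    all (fun p => compatible p.1 p.2 t d) partial
                  & extendable ts ((t, d) :: partial)]) dom.
Proof.
rewrite /=; elim: dom => //= d ds ->.
by rewrite andbA; case: (_ && _) => //=; case: extendable.
Qed.

Lemma extendable_complete (g : T -> D) (ts s : seq T) :
  {in ts, forall t, (g t \in dom) && admissible t (g t)} ->
  {in s ++ ts &, forall t t', compatible t (g t) t' (g t')} ->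
  extendable ts [seq (t, g t) | t <- s].
Proof.
elim: ts s => [//|t ts IH] s g_ok g_compat; rewrite extendable_cons.
have t_ts : t \in t :: ts by rewrite inE eqxx.
have /andP[dom_gt adm_gt] := g_ok t t_ts.
apply/hasP; exists (g t) => //; rewrite adm_gt /=; apply/andP; split.
  apply/allP => _ /mapP[t' t'_s ->]; apply: g_compat.
  - by rewrite mem_cat t'_s.
  - by rewrite mem_cat t_ts orbT.
apply: (IH (t :: s)) => [t' t'_ts|t1 t2 t1_in t2_in].
  by apply: g_ok; rewrite inE t'_ts orbT.
have sub : {subset (t :: s) ++ ts <= s ++ t :: ts}.
  by move=> y; rewrite /= !inE !mem_cat inE => /or3P[->|->|->]; rewrite ?orbT.
exact: g_compat (sub _ t1_in) (sub _ t2_in).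
Qed.

End Backtracking.

Lemma forall_ord_all n (P : pred nat) : [forall v : 'I_n, P v] = all P (iota 0 n).
Proof.
rewrite -val_enum_ord all_map.
by apply/forallP/allP => [Pv v _|Pv v]; apply: Pv; rewrite ?mem_enum.
Qed.

Lemma maxdeg_sub_leq n (x : profile n) w k :
  (maxdeg x - indeg w x <= k) = [forall v, indeg v x <= indeg w x + k].
Proof.
rewrite leq_subLR addnC.
by apply/bigmax_leqP/forallP => [le_v v|le_v v _]; apply: le_v.
Qed.

Section ProfilesOfLists.

Variable n : nat.

(* Row [u] of [x] lists the vertices nominated by [u]; entries [>= n] are ignored. *)
Definition profile_of (x : seq (seq nat)) : profile n :=
  [ffun u : 'I_n => [set v : 'I_n | val v \in nth [::] x u]].

Definition seq_indeg (x : seq (seq nat)) (v : nat) : nat :=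
  count (fun u => v \in nth [::] x u) (iota 0 n).

Definition seq_loopless (x : seq (seq nat)) : bool :=
  all (fun u => u \notin nth [::] x u) (iota 0 n).

Definition differing_rows (x y : seq (seq nat)) : seq nat :=
  [seq u <- iota 0 n | nth [::] x u != nth [::] y u].

Lemma indeg_profile_of x (v : 'I_n) : indeg v (profile_of x) = seq_indeg x v.
Proof.
rewrite /indeg /seq_indeg -sum1_card -sum1_count -val_enum_ord big_map big_enum_cond.
by apply: eq_bigl => u; rewrite !inE ffunE inE.
Qed.

Lemma loopless_profile_of x : seq_loopless x -> loopless (profile_of x).
Proof.
move=> /allP x_loopless u; rewrite ffunE inE.
by apply: x_loopless; rewrite mem_iota ltn_ord.
Qed.

Lemma differing_rows_single x y u :
  differing_rows x y = [:: u] ->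
  exists U : 'I_n, val U = u /\ profile_of y = update (profile_of x) U (profile_of y U).
Proof.
move=> diff_xy.
have : u \in differing_rows x y by rewrite diff_xy inE.
rewrite mem_filter mem_iota /= => /andP[_ u_lt_n].
exists (Ordinal u_lt_n); split => //; apply/ffunP => v; rewrite !ffunE.
case: eqP => [-> //|v_neq_u].
case: (eqVneq (nth [::] x v) (nth [::] y v)) => [-> //|row_neq].
exfalso; apply/v_neq_u/val_inj => /=.
have : val v \in differing_rows x y by rewrite mem_filter row_neq mem_iota ltn_ord.
by rewrite diff_xy inE => /eqP.
Qed.

Definition near_max (k : nat) (x : seq (seq nat)) (w : nat) : bool :=
  all (fun v => seq_indeg x v <= seq_indeg x w + k) (iota 0 n).

Lemma near_max_profile_of k x (w : 'I_n) :
  (maxdeg (profile_of x) - indeg w (profile_of x) <= k) = near_max k x w.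
Proof.
rewrite maxdeg_sub_leq /near_max -forall_ord_all.
by apply: eq_forallb => v; rewrite !indeg_profile_of.
Qed.

Definition impartial_pair (x : seq (seq nat)) (a : nat) (y : seq (seq nat)) (b : nat) : bool :=
  if differing_rows x y is [:: u] then (a == u) == (b == u) else true.

End ProfilesOfLists.

Lemma impartial_pair_winners (f : mechanism) n x y :
  impartial f -> seq_loopless n.+1 x -> seq_loopless n.+1 y ->
  impartial_pair n.+1 x (val (f n (profile_of n.+1 x))) y (val (f n (profile_of n.+1 y))).
Proof.
move=> f_impartial x_loopless y_loopless; rewrite /impartial_pair.
case diff_xy: differing_rows => [|u []] //.
have [U [<- ->]] := differing_rows_single diff_xy.
apply/eqP.
exact: f_impartial (loopless_profile_of x_loopless) (loopless_profile_of y_loopless U).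
Qed.

Definition certificate : seq (seq (seq nat)) :=
  [:: [:: [:: 1]; [:: 2]; [:: 1]; [:: 2]];
      [:: [:: 1]; [:: 2]; [:: 1]; [:: 1]];
      [:: [:: 1]; [::]; [:: 1]; [:: 1]];
      [:: [:: 1]; [:: 2]; [:: 0; 1]; [:: 1]];
      [:: [:: 1]; [:: 0]; [:: 0; 1]; [:: 1]];
      [:: [:: 1]; [:: 0]; [:: 0; 1]; [:: 0]];
      [:: [:: 1]; [:: 2]; [:: 0; 1]; [:: 0]];
      [:: [:: 1]; [:: 0]; [:: 0]; [:: 0]];
      [:: [:: 1]; [:: 2]; [:: 0]; [:: 0]];
      [:: [::]; [:: 0]; [:: 0]; [:: 0]];
      [:: [:: 2]; [:: 0]; [:: 0; 1]; [:: 0]];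
      [:: [:: 2]; [:: 0]; [:: 0; 1]; [:: 1]];
      [:: [:: 2]; [:: 2]; [:: 0; 1]; [:: 0]];
      [:: [:: 2]; [:: 2]; [:: 0; 1]; [:: 1]];
      [:: [:: 2]; [:: 2]; [:: 1]; [:: 1]];
      [:: [:: 2]; [:: 0]; [:: 1]; [:: 1]];
      [:: [:: 2]; [:: 0]; [:: 1]; [:: 0]];
      [:: [:: 2]; [:: 2]; [:: 1]; [:: 0]];
      [:: [:: 2]; [:: 2]; [:: 1]; [:: 1; 2]];
      [:: [:: 2]; [:: 0]; [:: 1]; [:: 1; 2]];
      [:: [:: 1]; [:: 0]; [:: 1]; [:: 1; 2]];
      [:: [:: 1]; [:: 0]; [:: 0]; [:: 1; 2]];
      [:: [:: 1]; [:: 2]; [:: 0]; [:: 1; 2]];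
      [:: [:: 2]; [:: 2]; [:: 0]; [:: 1; 2]];
      [:: [:: 2]; [:: 0]; [:: 0]; [:: 1; 2]];
      [:: [:: 2]; [:: 2]; [:: 3]; [:: 1; 2]];
      [:: [:: 1]; [:: 2]; [:: 3]; [:: 1; 2]];
      [:: [:: 1]; [:: 2]; [:: 3]; [:: 2]];
      [:: [:: 2]; [:: 2]; [:: 0]; [:: 2]];
      [:: [:: 2]; [:: 2]; [::]; [:: 2]];
      [:: [:: 1]; [:: 3]; [:: 1]; [:: 1; 2]];
      [:: [:: 1]; [:: 3]; [:: 1]; [:: 2]];
      [:: [:: 1]; [:: 3]; [:: 3]; [:: 2]];
      [:: [:: 1]; [:: 3]; [:: 3]; [:: 1; 2]];
      [:: [:: 2; 3]; [:: 3]; [:: 3]; [:: 2]];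
      [:: [:: 2; 3]; [:: 3]; [:: 1]; [:: 2]];
      [:: [:: 2; 3]; [:: 2]; [:: 1]; [:: 2]];
      [:: [:: 2; 3]; [:: 2]; [:: 0]; [:: 2]];
      [:: [:: 2; 3]; [:: 2]; [:: 0]; [:: 0]];
      [:: [:: 2; 3]; [:: 2]; [:: 1]; [:: 0]];
      [:: [:: 2; 3]; [:: 3]; [:: 1]; [:: 0]];
      [:: [:: 2; 3]; [:: 3]; [:: 3]; [:: 0]];
      [:: [:: 3]; [:: 3]; [:: 3]; [:: 0]];
      [:: [:: 1; 3]; [:: 3]; [:: 3]; [:: 0]];
      [:: [:: 1; 3]; [:: 3]; [:: 1]; [:: 0]];
      [:: [:: 1; 3]; [:: 0]; [:: 1]; [:: 0]];
      [:: [:: 1; 3]; [:: 0]; [:: 1]; [:: 1]];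
      [:: [:: 1; 3]; [:: 3]; [:: 1]; [:: 1]];
      [:: [:: 3]; [:: 3]; [:: 3]; [::]]].

Lemma certificate_loopless : all (seq_loopless 4) certificate.
Proof. by vm_compute. Qed.

Lemma certificate_unsatisfiable :
  extendable (iota 0 4) (near_max 4 2) (impartial_pair 4) certificate [::] = false.
Proof. by vm_compute. Qed.

Theorem mainTheorem6 (f : mechanism) :
  impartial f ->
  exists (n : nat) (x : profile n.+1),
    loopless x /\ (maxdeg x - indeg (f n x) x > 2)%N.
Proof.
move=> f_impartial.
have loopless_cert := allP certificate_loopless.
pose winner x := val (f 3 (profile_of 4 x)).
have [/hasP[x x_cert]|/hasPn winners_near_max] :=
  boolP (has (fun x => ~~ near_max 4 2 x (winner x)) certificate).
  rewrite -near_max_profile_of -ltnNge => violation.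
  by exists 3, (profile_of 4 x); split; first exact/loopless_profile_of/loopless_cert.
suff : extendable (iota 0 4) (near_max 4 2) (impartial_pair 4) certificate [::].
  by rewrite certificate_unsatisfiable.
apply: (@extendable_complete _ _ _ _ _ winner _ [::]) => [x x_cert|x y x_cert y_cert].
  by rewrite mem_iota ltn_ord; apply/negbNE/winners_near_max.
exact: impartial_pair_winners (loopless_cert x x_cert) (loopless_cert y y_cert).
Qed.
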